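(* Let $H\in C^\infty(\mathbb{R}^2)$ be convex and let $U\subset\mathbb{R}^2$ be a domain. For every $v\in C^\infty(U)$, $$2(-\det D^2v)[\det D^2_{pp}H(Dv)]=\operatorname{div}\Big\{D^2_{pp}H(Dv)D[H(Dv)]-\operatorname{div}[D_pH(Dv)]\,D_pH(Dv)\Big\}\quad\text{in }U.$$ *)

From Stdlib Require Import Reals List.
From Coquelicot Require Import Coquelicot.
Open Scope R_scope.

Definition d1 (f : R -> R -> R) : R -> R -> R :=
  fun x y => Derive (fun t => f t y) x.
Definition d2 (f : R -> R -> R) : R -> R -> R :=
  fun x y => Derive (fun t => f x t) y.

Definition pd (i : bool) (f : R -> R -> R) : R -> R -> R :=
  if i then d2 f else d1 f.

Definition iter_pd (l : list bool) (f : R -> R -> R) : R -> R -> R :=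
  fold_right pd f l.

Definition uncurry2 (f : R -> R -> R) : R * R -> R := fun p => f (fst p) (snd p).

Definition smooth_on (U : R -> R -> Prop) (f : R -> R -> R) : Prop :=
  forall (l : list bool) (x y : R), U x y ->
    continuous (uncurry2 (iter_pd l f)) (x, y) /\
    ex_derive (fun t => iter_pd l f t y) x /\
    ex_derive (fun t => iter_pd l f x t) y.

Definition convex2 (H : R -> R -> R) : Prop :=
  forall (x1 y1 x2 y2 t : R), 0 <= t <= 1 ->
    H (t * x1 + (1 - t) * x2) (t * y1 + (1 - t) * y2)
      <= t * H x1 y1 + (1 - t) * H x2 y2.

Definition open2 (U : R -> R -> Prop) : Prop :=
  open (fun p : R * R => U (fst p) (snd p)).

Definition connected2 (U : R -> R -> Prop) : Prop :=
  forall A B : R * R -> Prop, open A -> open B ->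
    (forall x y, U x y -> A (x, y) \/ B (x, y)) ->
    (forall x y, U x y -> A (x, y) -> B (x, y) -> False) ->
    (forall x y, U x y -> A (x, y)) \/ (forall x y, U x y -> B (x, y)).

Definition domain2 (U : R -> R -> Prop) : Prop :=
  open2 U /\ connected2 U /\ exists x y, U x y.

Definition detHess (f : R -> R -> R) : R -> R -> R :=
  fun x y => d1 (d1 f) x y * d2 (d2 f) x y - d1 (d2 f) x y * d2 (d1 f) x y.

Definition atDv (g v : R -> R -> R) : R -> R -> R :=
  fun x y => g (d1 v x y) (d2 v x y).

(* the vector field W = D^2_pp H(Dv) D[H(Dv)] - div[D_p H(Dv)] D_p H(Dv),
   component i (false = first, true = second) *)
Definition Wfield (H v : R -> R -> R) (i : bool) : R -> R -> R :=
  fun x y =>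
    atDv (pd i (d1 H)) v x y * d1 (atDv H v) x y
    + atDv (pd i (d2 H)) v x y * d2 (atDv H v) x y
    - (d1 (atDv (d1 H) v) x y + d2 (atDv (d2 H) v) x y) * atDv (pd i H) v x y.

Definition div2 (W : bool -> R -> R -> R) : R -> R -> R :=
  fun x y => d1 (W false) x y + d2 (W true) x y.

(* With A = D^2_pp H(Dv) and M = D^2 v, the chain rule gives D[H(Dv)] = M D_pH(Dv) and
   div[D_pH(Dv)] = tr(AM), so the field is (AM - tr(AM) I) D_pH(Dv) = -adj(M) adj(A) D_pH(Dv)
   (Cayley-Hamilton in dimension 2).  The columns of the adjugate of a Hessian are divergence
   free, and adj(A) A = det A I; hence the divergence is -det M tr(adj(A) A) = -2 det M det A.
   Formally, both sides are expanded by the product and chain rules into polynomials in the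
   derivatives of v and H of order at most three; after identifying mixed partials (Schwarz)
   they agree as polynomials. *)

From Stdlib Require Import Reals List Permutation.
From Coquelicot Require Import Coquelicot.
(* Imported last, so that its [d1], [d2] shadow those of Stdlib's Ranalysis. *)
Open Scope R_scope.

Lemma smooth_on_pd U i f : smooth_on U f -> smooth_on U (pd i f).
Proof.
  intros Hf l x y Hxy. specialize (Hf (l ++ i :: nil) x y Hxy).
  unfold iter_pd in *. rewrite fold_right_app in Hf. exact Hf.
Qed.

Lemma smooth_on_iter_pd U l f : smooth_on U f -> smooth_on U (iter_pd l f).
Proof. intros Hf. induction l as [|i l IH]; [exact Hf | exact (smooth_on_pd U i _ IH)]. Qed.

Lemma is_derive_d1 U f x y :
  smooth_on U f -> U x y -> is_derive (fun t => f t y) x (d1 f x y).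
Proof. intros Hf Hxy. exact (Derive_correct _ _ (proj1 (proj2 (Hf nil x y Hxy)))). Qed.

Lemma is_derive_d2 U f x y :
  smooth_on U f -> U x y -> is_derive (fun t => f x t) y (d2 f x y).
Proof. intros Hf Hxy. exact (Derive_correct _ _ (proj2 (proj2 (Hf nil x y Hxy)))). Qed.

Lemma d1_unique f x y l : is_derive (fun t => f t y) x l -> d1 f x y = l.
Proof. exact (is_derive_unique _ _ _). Qed.

Lemma d2_unique f x y l : is_derive (fun t => f x t) y l -> d2 f x y = l.
Proof. exact (is_derive_unique _ _ _). Qed.

Section OpenSet.

Variable U : R -> R -> Prop.
Hypothesis U_open : open2 U.

Lemma locally_2d_open x y : U x y -> locally_2d U x y.
Proof. intros Hxy. apply locally_2d_locally, U_open, Hxy. Qed.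

Lemma pd_ext_on i f g x y : (forall a b, U a b -> f a b = g a b) -> U x y ->
  pd i f x y = pd i g x y.
Proof.
  intros Efg Hxy. destruct i; apply Derive_ext_loc.
  - apply (filter_imp (fun t => U x t)); [intros t; apply Efg|].
    exact (locally_2d_1d_const_x _ _ _ (locally_2d_open x y Hxy)).
  - apply (filter_imp (fun t => U t y)); [intros t; apply Efg|].
    exact (locally_2d_1d_const_y _ _ _ (locally_2d_open x y Hxy)).
Qed.

Lemma d1_d2_comm f x y : smooth_on U f -> U x y -> d1 (d2 f) x y = d2 (d1 f) x y.
Proof.
  intros Hf Hxy. apply Schwarz.
  - apply (locally_2d_impl U); [|exact (locally_2d_open x y Hxy)].
    apply locally_2d_forall. intros a b Hab. repeat split.
    + exact (proj1 (proj2 (Hf nil a b Hab))).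
    + exact (proj2 (proj2 (Hf nil a b Hab))).
    + exact (proj1 (proj2 (Hf (true :: nil) a b Hab))).
    + exact (proj2 (proj2 (Hf (false :: nil) a b Hab))).
  - apply continuity_2d_pt_filterlim, (Hf (false :: true :: nil) x y Hxy).
  - apply continuity_2d_pt_filterlim, (Hf (true :: false :: nil) x y Hxy).
Qed.

Lemma iter_pd_perm l l' f x y : Permutation l l' -> smooth_on U f -> U x y ->
  iter_pd l f x y = iter_pd l' f x y.
Proof.
  intros Hl Hf. revert x y. induction Hl as [|i l l' _ IH|i j l|l l' l'' _ IH _ IH']; intros x y Hxy.
  - reflexivity.
  - exact (pd_ext_on i _ _ x y IH Hxy).
  - destruct i, j; try reflexivity; simpl.
    + exact (d1_d2_comm _ x y (smooth_on_iter_pd U l f Hf) Hxy).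
    + symmetry. exact (d1_d2_comm _ x y (smooth_on_iter_pd U l f Hf) Hxy).
  - rewrite (IH x y Hxy). exact (IH' x y Hxy).
Qed.

Lemma mixed_pd_sym f x y : smooth_on U f -> U x y ->
  d1 (d2 f) x y = d2 (d1 f) x y /\
  d1 (d1 (d2 f)) x y = d2 (d1 (d1 f)) x y /\
  d1 (d2 (d1 f)) x y = d2 (d1 (d1 f)) x y /\
  d1 (d2 (d2 f)) x y = d2 (d2 (d1 f)) x y /\
  d2 (d1 (d2 f)) x y = d2 (d2 (d1 f)) x y.
Proof.
  intros Hf Hxy.
  assert (Hperm : forall l l', Permutation l l' -> iter_pd l f x y = iter_pd l' f x y)
    by (intros l l' Hl; exact (iter_pd_perm l l' f x y Hl Hf Hxy)).
  repeat split;
    [ apply (Hperm (false :: true :: nil) (true :: false :: nil))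
    | apply (Hperm (false :: false :: true :: nil) (true :: false :: false :: nil))
    | apply (Hperm (false :: true :: false :: nil) (true :: false :: false :: nil))
    | apply (Hperm (false :: true :: true :: nil) (true :: true :: false :: nil))
    | apply (Hperm (true :: false :: true :: nil) (true :: true :: false :: nil)) ];
    apply (Permutation_count_occ Bool.bool_dec); intros []; reflexivity.
Qed.

Lemma differentiable_pt_lim_smooth G a b : smooth_on U G -> U a b ->
  differentiable_pt_lim G a b (d1 G a b) (d2 G a b).
Proof.
  intros HG Hab. apply filterdiff_differentiable_pt_lim.
  apply (is_derive_filterdiff G a b (d1 G)).
  - apply (filter_imp (fun p => U (fst p) (snd p))); [|exact (U_open (a, b) Hab)].
    intros [c d] Hcd. exact (is_derive_d1 U G c d HG Hcd).
  - exact (is_derive_d2 U G a b HG Hab).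
  - exact (proj1 (HG (false :: nil) a b Hab)).
Qed.

End OpenSet.

Lemma is_derive_comp_2d G f g t lx ly df dg :
  differentiable_pt_lim G (f t) (g t) lx ly -> is_derive f t df -> is_derive g t dg ->
  is_derive (fun s => G (f s) (g s)) t (lx * df + ly * dg).
Proof.
  intros HG Hf Hg. apply is_derive_Reals.
  apply derivable_pt_lim_comp_2d; [exact HG | apply is_derive_Reals..]; assumption.
Qed.

Definition chain_atDv (G v : R -> R -> R) (j : bool) : R -> R -> R :=
  fun x y => atDv (d1 G) v x y * pd j (d1 v) x y + atDv (d2 G) v x y * pd j (d2 v) x y.

Section ChainRule.

Variables (U : R -> R -> Prop) (v : R -> R -> R).
Hypothesis v_smooth : smooth_on U v.

Lemma is_derive_atDv_x G x y : smooth_on (fun _ _ => True) G -> U x y ->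
  is_derive (fun t => atDv G v t y) x (chain_atDv G v false x y).
Proof.
  intros HG Hxy. apply (is_derive_comp_2d G (fun t => d1 v t y) (fun t => d2 v t y)).
  - exact (differentiable_pt_lim_smooth _ open_true G _ _ HG I).
  - exact (is_derive_d1 U _ x y (smooth_on_pd U false v v_smooth) Hxy).
  - exact (is_derive_d1 U _ x y (smooth_on_pd U true v v_smooth) Hxy).
Qed.

Lemma is_derive_atDv_y G x y : smooth_on (fun _ _ => True) G -> U x y ->
  is_derive (fun t => atDv G v x t) y (chain_atDv G v true x y).
Proof.
  intros HG Hxy. apply (is_derive_comp_2d G (fun t => d1 v x t) (fun t => d2 v x t)).
  - exact (differentiable_pt_lim_smooth _ open_true G _ _ HG I).
  - exact (is_derive_d2 U _ x y (smooth_on_pd U false v v_smooth) Hxy).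
  - exact (is_derive_d2 U _ x y (smooth_on_pd U true v v_smooth) Hxy).
Qed.

Lemma d1_atDv G x y : smooth_on (fun _ _ => True) G -> U x y ->
  d1 (atDv G v) x y = chain_atDv G v false x y.
Proof. intros HG Hxy. exact (d1_unique _ _ _ _ (is_derive_atDv_x G x y HG Hxy)). Qed.

Lemma d2_atDv G x y : smooth_on (fun _ _ => True) G -> U x y ->
  d2 (atDv G v) x y = chain_atDv G v true x y.
Proof. intros HG Hxy. exact (d2_unique _ _ _ _ (is_derive_atDv_y G x y HG Hxy)). Qed.

End ChainRule.

Ltac smooth_on_tac :=
  match goal with
  | |- smooth_on _ (d1 _) => apply (smooth_on_pd _ false); smooth_on_tac
  | |- smooth_on _ (d2 _) => apply (smooth_on_pd _ true); smooth_on_tac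
  | _ => assumption
  end.

Lemma is_derive_Rplus (f g : R -> R) x df dg :
  is_derive f x df -> is_derive g x dg -> is_derive (fun t => f t + g t) x (df + dg).
Proof. exact (is_derive_plus f g x df dg). Qed.

Lemma is_derive_Rminus (f g : R -> R) x df dg :
  is_derive f x df -> is_derive g x dg -> is_derive (fun t => f t - g t) x (df - dg).
Proof. exact (is_derive_minus f g x df dg). Qed.

Lemma is_derive_Rmult (f g : R -> R) x df dg :
  is_derive f x df -> is_derive g x dg -> is_derive (fun t => f t * g t) x (df * g x + f x * dg).
Proof. intros Hf Hg. apply (is_derive_mult f g x df dg Hf Hg), Rmult_comm. Qed.

Section Identity.

Variables (H v : R -> R -> R) (U : R -> R -> Prop).
Hypotheses (H_smooth : smooth_on (fun _ _ => True) H) (U_open : open2 U)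
  (v_smooth : smooth_on U v).

Definition Wfield_chain (i : bool) : R -> R -> R := fun x y =>
  atDv (pd i (d1 H)) v x y * chain_atDv H v false x y
  + atDv (pd i (d2 H)) v x y * chain_atDv H v true x y
  - (chain_atDv (d1 H) v false x y + chain_atDv (d2 H) v true x y) * atDv (pd i H) v x y.

Lemma Wfield_eq_chain i x y : U x y -> Wfield H v i x y = Wfield_chain i x y.
Proof.
  intros Hxy. unfold Wfield, Wfield_chain.
  rewrite (d1_atDv U v v_smooth H), (d2_atDv U v v_smooth H),
    (d1_atDv U v v_smooth (d1 H)), (d2_atDv U v v_smooth (d2 H)) by smooth_on_tac.
  reflexivity.
Qed.

Ltac derive_step :=
  match goal with
  | |- is_derive (fun t => _ + _) _ _ => apply is_derive_Rplus
  | |- is_derive (fun t => _ - _) _ _ => apply is_derive_Rminus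
  | |- is_derive (fun t => _ * _) _ _ => apply is_derive_Rmult
  | |- is_derive (fun t => atDv _ v t _) _ _ => apply (is_derive_atDv_x U v v_smooth); [smooth_on_tac|assumption]
  | |- is_derive (fun t => atDv _ v _ t) _ _ => apply (is_derive_atDv_y U v v_smooth); [smooth_on_tac|assumption]
  | |- is_derive (fun t => _ t _) _ _ => apply (is_derive_d1 U); [smooth_on_tac|assumption]
  | |- is_derive (fun t => _ _ t) _ _ => apply (is_derive_d2 U); [smooth_on_tac|assumption]
  (* Along y the terms [fun t => f x t] may appear eta-reduced to [f x]. *)
  | |- is_derive (atDv _ v _) _ _ => apply (is_derive_atDv_y U v v_smooth); [smooth_on_tac|assumption]
  | |- is_derive (_ _) _ _ => apply (is_derive_d2 U); [smooth_on_tac|assumption]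
  end.

Lemma div2_Wfield x y : U x y ->
  div2 (Wfield H v) x y = 2 * (- detHess v x y) * atDv (detHess H) v x y.
Proof.
  intros Hxy. unfold div2.
  rewrite (pd_ext_on U U_open false _ _ x y (Wfield_eq_chain false) Hxy : d1 _ x y = d1 _ x y),
    (pd_ext_on U U_open true _ _ x y (Wfield_eq_chain true) Hxy : d2 _ x y = d2 _ x y).
  eassert (Dx : is_derive (fun t => Wfield_chain false t y) x _).
  { unfold Wfield_chain, chain_atDv; simpl. repeat derive_step. }
  eassert (Dy : is_derive (fun t => Wfield_chain true x t) y _).
  { unfold Wfield_chain, chain_atDv; simpl. repeat derive_step. }
  simpl. rewrite (d1_unique _ _ _ _ Dx), (d2_unique _ _ _ _ Dy).
  destruct (mixed_pd_sym U U_open v x y v_smooth Hxy) as (v12 & v112 & v121 & v122 & v212).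
  destruct (mixed_pd_sym _ open_true H (d1 v x y) (d2 v x y) H_smooth I)
    as (H12 & H112 & H121 & H122 & H212).
  unfold chain_atDv, detHess, atDv; simpl.
  rewrite v12, v112, v121, v122, v212, H12, H112, H121, H122, H212.
  ring.
Qed.

End Identity.

Theorem lemma2p2 (H : R -> R -> R) (U : R -> R -> Prop) (v : R -> R -> R) :
  smooth_on (fun _ _ => True) H -> convex2 H -> domain2 U ->
  smooth_on U v ->
  forall x y : R, U x y ->
    2 * (- detHess v x y) * atDv (detHess H) v x y
    = div2 (Wfield H v) x y.
Proof.
  intros H_smooth _ [U_open _] v_smooth x y Hxy.
  symmetry. exact (div2_Wfield H v U H_smooth U_open v_smooth x y Hxy).
Qed.
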